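(* Let $G=(V,E)$ be a finite simple graph. (i) If $x$ is a tree-like vertex of $G$ and $y\ne x$ is any vertex, then $x$ is a tree-like vertex of the graph obtained from $G$ by removing $y$ and its incident edges. (ii) If $Y\subseteq V$ is a set of tree-like vertices of $G$ and $G'$ is the induced subgraph of $G$ on $V\setminus Y$, then $\ell(G')=\ell(G)$.
   Context: A vertex $x$ of degree $d_x$ is tree-like if removing $x$ and its incident edges from $G$ increases the number of connected components by $d_x-1$. For a graph $H$, $\ell(H)=|E(H)|-|V(H)|+c(H)$, where $c(H)$ is the number of connected components of $H$. *)

From mathcomp Require Import all_boot all_order all_algebra.
Set Implicit Arguments. Unset Strict Implicit. Unset Printing Implicit Defensive.
Import GRing.Theory Num.Theory.
Local Open Scope ring_scope.

(* A finite simple graph: vertex type T : finType, adjacency e : rel T assumed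
   symmetric and irreflexive.  Subgraphs induced on a vertex set S : {set T}. *)
Section Graph.
Variables (T : finType) (e : rel T).

Definition adj_in (S : {set T}) : rel T :=
  fun x y => [&& x \in S, y \in S & e x y].

Definition edges_in (S : {set T}) : {set {set T}} :=
  [set E : {set T} | [exists x : T, exists y : T, (E == [set x; y]) && adj_in S x y]].

Definition comp_in (S : {set T}) (x : T) : {set T} :=
  [set y in S | connect (adj_in S) x y].

Definition ncomp_in (S : {set T}) : nat :=
  #|[set comp_in S x | x in S]|.

Definition deg_in (S : {set T}) (x : T) : nat :=
  #|[set y in S | adj_in S x y]|.

Definition treelike_in (S : {set T}) (x : T) : Prop :=
  x \in S /\
  (ncomp_in (S :\ x))%:Z = (ncomp_in S)%:Z + (deg_in S x)%:Z - 1.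

Definition ell_in (S : {set T}) : int :=
  (#|edges_in S|%N)%:Z - (#|S|%N)%:Z + (ncomp_in S)%:Z.

End Graph.

From mathcomp Require Import all_boot all_order all_algebra.
From mathcomp Require Import ring.
Import GRing.Theory.
Set Implicit Arguments. Unset Strict Implicit. Unset Printing Implicit Defensive.

(* Removing a vertex x from S merges nothing and splits only the component of x:
   the components of S - x not meeting the neighbourhood N(x) are components of
   S, and those meeting N(x) together with x form the component of x in S.
   Hence c(S - x) + 1 = c(S) + #{components of S - x meeting N(x)}, so x is
   tree-like iff its neighbours lie in pairwise distinct components of S - x.
   This property survives deleting another vertex, since components only
   shrink; and deleting a tree-like vertex lowers |E| by deg x, |V| by 1 and
   raises c by deg x - 1, leaving l unchanged. *)

Lemma Posz_eq_addB1 (a b n : nat) :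
  (a%:Z = b%:Z + n%:Z - 1)%R <-> (a + 1 = b + n)%N.
Proof.
split=> h; first by apply/eqP; rewrite -eqz_nat PoszD h subrK.
by rewrite -PoszD -h PoszD addrK.
Qed.

Section TreeLike.
Variables (T : finType) (e : rel T).
Hypotheses (e_sym : symmetric e) (e_irr : irreflexive e).
Implicit Types (S A Y : {set T}) (x y u v z : T).

Definition nbr_in S x : {set T} := [set y in S | adj_in e S x y].

Definition comps_in S : {set {set T}} := [set comp_in e S z | z in S].

Lemma adj_in_sym S : symmetric (adj_in e S).
Proof. by move=> x y; rewrite /adj_in e_sym andbCA. Qed.

Lemma adj_in_subset S A x y : S \subset A -> adj_in e S x y -> adj_in e A x y.
Proof.
by move=> sSA /and3P[xS yS exy]; rewrite /adj_in (subsetP sSA x xS) (subsetP sSA y yS).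
Qed.

Lemma connect_adj_in_subset S A x y :
  S \subset A -> connect (adj_in e S) x y -> connect (adj_in e A) x y.
Proof. by move=> sSA; apply: connect_sub => a b /(adj_in_subset sSA)/connect1. Qed.

Lemma mem_comp_in S u : u \in S -> u \in comp_in e S u.
Proof. by move=> uS; rewrite inE uS connect0. Qed.

Lemma comp_in_sub S u : comp_in e S u \subset S.
Proof. by apply/subsetP=> y; rewrite inE => /andP[]. Qed.

Lemma comp_in_connect S u v :
  connect (adj_in e S) u v -> comp_in e S u = comp_in e S v.
Proof.
move=> cuv; apply/setP=> y.
by rewrite !inE (same_connect (sym_connect_sym (adj_in_sym S)) cuv).
Qed.

Lemma comp_in_eq S u v : v \in comp_in e S u -> comp_in e S u = comp_in e S v.
Proof. by rewrite inE => /andP[_]; apply: comp_in_connect. Qed.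

Lemma nbr_in_neq S x u : u \in nbr_in S x -> u != x.
Proof.
by rewrite !inE => /andP[_ /and3P[_ _]]; apply: contraTneq => ->; rewrite e_irr.
Qed.

Lemma nbr_in_setD1 S x u : u \in nbr_in S x -> u \in S :\ x.
Proof. by move=> uN; rewrite in_setD1 (nbr_in_neq uN); case/setIdP: uN. Qed.

Lemma nbr_in_subset S A x u : S \subset A -> u \in nbr_in S x -> u \in nbr_in A x.
Proof.
by move=> sSA /setIdP[uS xu]; rewrite inE (subsetP sSA u uS) (adj_in_subset sSA xu).
Qed.

Section DeleteVertex.
Variables (S : {set T}) (x : T).
Hypothesis xS : x \in S.

Local Notation A := (S :\ x).
Local Notation K := [set comp_in e A u | u in nbr_in S x].

Lemma comp_in_setD1_nbr z :
  comp_in e A z \in K -> comp_in e S z = comp_in e S x.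
Proof.
case/imsetP=> u uN eq_zu; apply: comp_in_connect.
apply: (@connect_trans _ _ u); last by rewrite connect1 // adj_in_sym; case/setIdP: uN.
apply: connect_adj_in_subset (subD1set S x) _.
by move: (mem_comp_in (nbr_in_setD1 uN)); rewrite -eq_zu inE => /andP[_].
Qed.

Lemma comp_in_setD1_free z :
  z \in A -> comp_in e A z \notin K -> comp_in e S z = comp_in e A z.
Proof.
move=> zA zK; apply/eqP; rewrite eqEsubset; apply/andP; split; last first.
  apply/subsetP=> y /setIdP[yA czy]; rewrite inE (subsetP (subD1set S x) y yA).
  exact: connect_adj_in_subset (subD1set S x) czy.
(* An S-edge leaving the component could only lead to x, from a neighbour of x. *)
have closedC : closed (adj_in e S) (comp_in e A z).
  apply: intro_closed; first exact: sym_connect_sym (adj_in_sym S).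
  move=> a b /and3P[aS bS eab] aC; have aA := subsetP (comp_in_sub A z) a aC.
  have [bx | bx] := eqVneq b x.
    case/negP: zK; apply/imsetP; exists a; last exact: comp_in_eq.
    by rewrite inE aS adj_in_sym /adj_in aS -bx bS eab.
  have bA : b \in A by rewrite in_setD1 bx.
  rewrite (comp_in_eq aC) inE bA connect1 //.
  by rewrite /adj_in aA bA.
apply/subsetP=> y /setIdP[_ czy].
by rewrite -(closed_connect closedC czy) mem_comp_in.
Qed.

Lemma comps_in_setD1 : comps_in S = comp_in e S x |: (comps_in A :\: K).
Proof.
apply/eqP; rewrite eqEsubset; apply/andP; split; apply/subsetP=> C.
  case/imsetP=> z zS ->; have [-> | zx] := eqVneq z x; first exact: setU11.
  have zA : z \in A by rewrite in_setD1 zx.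
  have [zK | zK] := boolP (comp_in e A z \in K).
    by rewrite (comp_in_setD1_nbr zK) setU11.
  by rewrite (comp_in_setD1_free zA zK) !inE zK imset_f ?orbT.
case/setU1P=> [-> | /setDP[/imsetP[z zA ->] zK]]; first exact: imset_f.
by rewrite -(comp_in_setD1_free zA zK) imset_f // (subsetP (subD1set S x)).
Qed.

Lemma ncomp_in_setD1 : (ncomp_in e S + #|K| = ncomp_in e A + 1)%N.
Proof.
have xK : comp_in e S x \notin comps_in A :\: K.
  apply/negP=> /setDP[/imsetP[z zA eq_xz] _].
  have : x \in comp_in e A z by rewrite -eq_xz mem_comp_in.
  by move/(subsetP (comp_in_sub A z)); rewrite !inE eqxx.
have KA : K \subset comps_in A by apply/imsetS/subsetP=> u /nbr_in_setD1.
rewrite /ncomp_in -/(comps_in S) -/(comps_in A) comps_in_setD1 cardsU1 xK.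
by rewrite -(cardsID K (comps_in A)) (setIidPr KA) /= add1n addSn addn1 addnC.
Qed.

Lemma treelike_inE :
  treelike_in e S x <-> {in nbr_in S x &, injective (comp_in e A)}.
Proof.
have eqK := ncomp_in_setD1; rewrite /treelike_in /deg_in -/(nbr_in S x).
split=> [[_ /Posz_eq_addB1 tl] | inj].
  by apply/imset_injP/eqP/(@addnI (ncomp_in e S)); rewrite eqK tl.
by split=> //; apply/Posz_eq_addB1; rewrite -eqK (card_in_imset inj).
Qed.

Lemma card_edges_in_setD1 :
  #|edges_in e S| = (#|edges_in e A| + deg_in e S x)%N.
Proof.
set Ex := [set [set x; y] | y in nbr_in S x].
have -> : edges_in e S = edges_in e A :|: Ex.
  apply/setP=> E; apply/idP/idP.
    rewrite inE => /existsP[a /existsP[b /andP[/eqP-> ab]]].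
    have [ax | ax] := eqVneq a x.
      subst a; apply/setUP; right; apply/imsetP; exists b => //.
      by rewrite inE ab andbT; case/and3P: ab.
    have [bx | bx] := eqVneq b x.
      subst b; apply/setUP; right; apply/imsetP; exists a; last exact: setUC.
      by rewrite inE adj_in_sym ab andbT; case/and3P: ab.
    case/and3P: ab => aS bS eab; apply/setUP; left.
    by rewrite inE; apply/existsP; exists a; apply/existsP; exists b;
      rewrite eqxx /adj_in !in_setD1 ax bx aS bS.
  case/setUP=> [| /imsetP[y yN ->]]; rewrite !inE.
    case/existsP=> a /existsP[b /andP[EE ab]].
    apply/existsP; exists a; apply/existsP; exists b.
    by rewrite EE (adj_in_subset (subD1set S x) ab).
  apply/existsP; exists x; apply/existsP; exists y.
  by rewrite eqxx; case/setIdP: yN.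
have disj : [disjoint edges_in e A & Ex].
  apply/pred0P=> E /=; rewrite inE; apply/andP=> -[/existsP[a /existsP[b]]].
  case/andP=> /eqP-> /and3P[aA bA _] /imsetP[y _ eq_ab].
  have : x \in [set a; b] by rewrite eq_ab set21.
  by rewrite !inE => /orP[] /eqP xE; [move: aA | move: bA]; rewrite -xE !inE eqxx.
have inj : {in nbr_in S x &, injective (fun y => [set x; y])}.
  move=> u v uN _ eq_uv; have : u \in [set x; v] by rewrite -eq_uv set22.
  by rewrite !inE (negbTE (nbr_in_neq uN)) => /eqP.
by have := (leq_card_setU (edges_in e A) Ex).2; rewrite disj (card_in_imset inj) => /eqP.
Qed.

End DeleteVertex.

Lemma treelike_in_setD1 S x y :
  treelike_in e S x -> y != x -> treelike_in e (S :\ y) x.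
Proof.
move=> tl yx; have xS := tl.1; have xSy : x \in S :\ y by rewrite in_setD1 eq_sym yx.
have sSyS := subD1set S y.
apply/(treelike_inE xSy) => u v uN vN eq_uv.
apply: ((treelike_inE xS).1 tl); try exact: nbr_in_subset sSyS _.
apply: comp_in_connect.
have vA : v \in S :\ y :\ x by apply: nbr_in_setD1 vN.
move: (mem_comp_in vA); rewrite -eq_uv inE => /andP[_].
exact/connect_adj_in_subset/setSD/subD1set.
Qed.

Lemma ell_in_setD1 S x : treelike_in e S x -> ell_in e (S :\ x) = ell_in e S.
Proof.
case=> xS tl; rewrite /ell_in tl (card_edges_in_setD1 S x).
by move: (cardsD1 x S); rewrite xS /= => ->; rewrite !PoszD; ring.
Qed.

Lemma ell_in_setD S Y :
  {in Y, forall x, treelike_in e S x} -> ell_in e (S :\: Y) = ell_in e S.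
Proof.
move: {2}#|Y| (erefl #|Y|) => n; elim: n S Y => [|n IH] S Y cardY tlY.
  by move/eqP: cardY; rewrite cards_eq0 => /eqP->; rewrite setD0.
have [x xY] : exists x, x \in Y by apply/set0Pn; rewrite -card_gt0 cardY.
have -> : S :\: Y = (S :\ x) :\: (Y :\ x).
  by apply/setP=> z; rewrite !inE; case: eqVneq => // ->; rewrite xY.
rewrite IH ?(ell_in_setD1 (tlY x xY)) //.
  by move: cardY; rewrite (cardsD1 x Y) xY => -[].
by move=> z /setD1P[zx zY]; apply: treelike_in_setD1; [exact: tlY | rewrite eq_sym].
Qed.

End TreeLike.

Theorem proposition6p1 (T : finType) (e : rel T)
    (e_sym : symmetric e) (e_irr : irreflexive e) :
  (forall x y : T, treelike_in e [set: T] x -> y != x ->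
      treelike_in e ([set: T] :\ y) x) /\
  (forall Y : {set T}, (forall x, x \in Y -> treelike_in e [set: T] x) ->
      ell_in e ([set: T] :\: Y) = ell_in e [set: T]).
Proof.
split=> [x y | Y]; first exact: treelike_in_setD1.
exact: ell_in_setD.
Qed.
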